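(* Suppose that $\Re s=1$, $u\ge1$, and $|s|>u$. For integers $m,\nu\ge1$, \[ \left|\frac{\partial^\nu}{\partial u^\nu}\left(G(u,s)^m\right)\right|\ll_{m,\nu}\frac{(1+\log|s|)^{m-1}}{u^\nu}\left(\frac{|s|}{u}\right)^{\nu-1}, \] with implied constant depending only on $m,\nu$.
   Context: $G(u,s):=\int_{0}^{1/u}\frac{1-e^{-ts}}{t}\,dt$. *)

From Stdlib Require Import Reals.
From Coquelicot Require Import Coquelicot.
Open Scope R_scope.

Definition Cexp (z : C) : C :=
  (exp (Re z) * cos (Im z), exp (Re z) * sin (Im z)).

Definition G (u : R) (s : C) : C :=
  RInt (V := C_R_CompleteNormedModule)
    (fun t : R => Cdiv (Cminus 1 (Cexp (Copp (Cmult (RtoC t) s)))) (RtoC t))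
    0 (/ u).

Definition Cderive_n (f : R -> C) (n : nat) (u : R) : C :=
  (Derive_n (fun x => Re (f x)) n u, Derive_n (fun x => Im (f x)) n u).

From Stdlib Require Import Reals Lra Lia List.
From Coquelicot Require Import Coquelicot.
Import ListNotations.
Open Scope R_scope.

(* Differentiating G(u, s) = int_0^(1/u) (1 - e^(-ts))/t dt in u gives
   (E - 1) w with E = e^(-s/u) and w = 1/u, and these satisfy E' = E s w^2,
   w' = - w^2.  Hence the nu-th derivative of G^m is a linear combination,
   with coefficients depending only on m and nu, of monomials
   G^j E^e s^b w^a with j < m, b < nu and a = b + nu.  For Re s = 1 and
   1 <= u < |s| we have |E| <= 1, |s|^b u^(-b-nu) <= (|s|/u)^(nu-1) u^(-nu),
   and |G(u, s)| <= 4 (1 + log (|s|/u)): split the integral at 1/|s| and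
   bound the integrand by 2|s| before that point and by 2/t after it. *)

Lemma is_derive_eq_val (f : R -> R) (x l l' : R) : is_derive f x l -> l = l' -> is_derive f x l'.
Proof. now intros H <-. Qed.

Section ComplexDerivative.

Variable D : R -> Prop.

Definition is_Cderive_on (f df : R -> C) : Prop :=
  forall v, D v ->
    is_derive (fun x => Re (f x)) v (Re (df v)) /\
    is_derive (fun x => Im (f x)) v (Im (df v)).

Lemma is_Cderive_on_ext f df df' :
  is_Cderive_on f df -> (forall v, D v -> df v = df' v) -> is_Cderive_on f df'.
Proof. intros H E v Dv; rewrite <- E by exact Dv; apply H, Dv. Qed.

Lemma is_Cderive_on_const (c : C) : is_Cderive_on (fun _ => c) (fun _ => RtoC 0).
Proof.
  intros v _; split; apply (is_derive_const (K := R_AbsRing) (V := R_NormedModule)).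
Qed.

Lemma is_Cderive_on_plus f df g dg :
  is_Cderive_on f df -> is_Cderive_on g dg ->
  is_Cderive_on (fun x => f x + g x)%C (fun x => df x + dg x)%C.
Proof.
  intros Hf Hg v Dv; destruct (Hf v Dv) as [Hfr Hfi], (Hg v Dv) as [Hgr Hgi].
  split; [exact (is_derive_plus _ _ _ _ _ Hfr Hgr) | exact (is_derive_plus _ _ _ _ _ Hfi Hgi)].
Qed.

Lemma is_Cderive_on_mult f df g dg :
  is_Cderive_on f df -> is_Cderive_on g dg ->
  is_Cderive_on (fun x => f x * g x)%C (fun x => df x * g x + f x * dg x)%C.
Proof.
  intros Hf Hg v Dv; destruct (Hf v Dv) as [Hfr Hfi], (Hg v Dv) as [Hgr Hgi].
  assert (Hcomm : forall x y : R_AbsRing, mult x y = mult y x) by (intros; apply Rmult_comm).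
  split.
  - eapply is_derive_eq_val.
    + exact (is_derive_minus _ _ _ _ _ (is_derive_mult _ _ _ _ _ Hfr Hgr Hcomm)
               (is_derive_mult _ _ _ _ _ Hfi Hgi Hcomm)).
    + unfold Re, Im; cbn -[Rmult Rplus Ropp Rminus]. ring.
  - eapply is_derive_eq_val.
    + exact (is_derive_plus _ _ _ _ _ (is_derive_mult _ _ _ _ _ Hfr Hgi Hcomm)
               (is_derive_mult _ _ _ _ _ Hfi Hgr Hcomm)).
    + unfold Re, Im; cbn -[Rmult Rplus Ropp Rminus]. ring.
Qed.

Lemma is_Cderive_on_pow f df n :
  is_Cderive_on f df ->
  is_Cderive_on (fun x => f x ^ n)%C (fun x => INR n * f x ^ (n - 1) * df x)%C.
Proof.
  intros Hf; induction n as [|n IH].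
  - eapply is_Cderive_on_ext; [exact (is_Cderive_on_const 1%C)|].
    intros v _; simpl; ring.
  - eapply is_Cderive_on_ext; [exact (is_Cderive_on_mult _ _ _ _ Hf IH)|].
    intros v _; cbv beta. rewrite S_INR, RtoC_plus.
    destruct n as [|n]; [simpl; ring|].
    replace (S (S n) - 1)%nat with (S n) by lia. replace (S n - 1)%nat with n by lia.
    rewrite Cpow_S. ring.
Qed.

Lemma Cderive_n_iter (F : nat -> R -> C) :
  open D -> (forall k, is_Cderive_on (F k) (F (S k))) ->
  forall n v, D v -> Cderive_n (F 0%nat) n v = F n v.
Proof.
  intros HD HF n.
  assert (Hcomp : forall v, D v ->
    Derive_n (fun x => Re (F 0%nat x)) n v = Re (F n v) /\
    Derive_n (fun x => Im (F 0%nat x)) n v = Im (F n v)).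
  { induction n as [|n IH]; intros v Dv; [split; reflexivity|].
    assert (Hloc : locally v D) by exact (locally_open D D HD (fun _ H => H) v Dv).
    destruct (HF n v Dv) as [Hre Him]; simpl; split.
    - rewrite (Derive_ext_loc _ (fun x => Re (F n x))); [exact (is_derive_unique _ _ _ Hre)|].
      eapply filter_imp; [|exact Hloc]. intros x Dx; apply IH, Dx.
    - rewrite (Derive_ext_loc _ (fun x => Im (F n x))); [exact (is_derive_unique _ _ _ Him)|].
      eapply filter_imp; [|exact Hloc]. intros x Dx; apply IH, Dx. }
  intros v Dv; destruct (Hcomp v Dv) as [Hre Him].
  unfold Cderive_n; rewrite Hre, Him. now destruct (F n v).
Qed.

End ComplexDerivative.

Record monomial := Mono { coef : R; deg_g : nat; deg_E : nat; deg_s : nat; deg_w : nat }.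

Section Monomials.

Variables (g E w : R -> C) (s : C).

Definition mon_val (t : monomial) (x : R) : C :=
  (g x ^ deg_g t * E x ^ deg_E t * s ^ deg_s t * w x ^ deg_w t)%C.

Definition poly_val (l : list monomial) (x : R) : C :=
  fold_right (fun t acc => coef t * mon_val t x + acc)%C (RtoC 0) l.

(* Product rule with g' = (E - 1) w, E' = E s w^2 and w' = - w^2. *)
Definition mon_deriv (t : monomial) : list monomial :=
  let 'Mono c j e b a := t in
  [Mono (- c * INR j) (j - 1) e b (S a); Mono (c * INR j) (j - 1) (S e) b (S a);
   Mono (c * INR e) j e (S b) (S (S a)); Mono (- c * INR a) j e b (S a)].

Definition poly_deriv (l : list monomial) : list monomial := flat_map mon_deriv l.

Lemma poly_val_app l1 l2 x : poly_val (l1 ++ l2) x = (poly_val l1 x + poly_val l2 x)%C.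
Proof. induction l1 as [|t l1 IH]; simpl; [ring|]. rewrite IH; ring. Qed.

Variable D : R -> Prop.
Hypothesis Hg : is_Cderive_on D g (fun x => (E x - 1) * w x)%C.
Hypothesis HE : is_Cderive_on D E (fun x => E x * s * (w x * w x))%C.
Hypothesis Hw : is_Cderive_on D w (fun x => - (w x * w x))%C.

Lemma is_Cderive_on_mon t :
  is_Cderive_on D (fun x => coef t * mon_val t x)%C (poly_val (mon_deriv t)).
Proof.
  destruct t as [c j e b a]; unfold mon_val; simpl.
  eapply is_Cderive_on_ext.
  - apply is_Cderive_on_mult; [apply is_Cderive_on_const|].
    apply is_Cderive_on_mult; [|apply is_Cderive_on_pow, Hw].
    apply is_Cderive_on_mult; [|apply is_Cderive_on_const].
    apply is_Cderive_on_mult; [apply is_Cderive_on_pow, Hg | apply is_Cderive_on_pow, HE].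
  - intros v _; simpl; unfold mon_val; simpl. rewrite !RtoC_mult, !RtoC_opp.
    destruct e as [|e], a as [|a]; simpl; rewrite ?Nat.sub_0_r; ring.
Qed.

Lemma is_Cderive_on_poly l : is_Cderive_on D (poly_val l) (poly_val (poly_deriv l)).
Proof.
  induction l as [|t l IH]; simpl.
  - exact (is_Cderive_on_const D 0).
  - eapply is_Cderive_on_ext; [exact (is_Cderive_on_plus _ _ _ _ _ (is_Cderive_on_mon t) IH)|].
    intros v _; symmetry; apply poly_val_app.
Qed.

End Monomials.

Definition sum_abs_coef (l : list monomial) : R :=
  fold_right (fun t acc => Rabs (coef t) + acc) 0 l.

Lemma sum_abs_coef_ge0 l : 0 <= sum_abs_coef l.
Proof. induction l as [|t l IH]; simpl; [lra|]. pose proof (Rabs_pos (coef t)); lra. Qed.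

Lemma Cmod_poly_val_le g E w s l x M :
  0 <= M -> (forall t, In t l -> coef t = 0 \/ Cmod (mon_val g E w s t x) <= M) ->
  Cmod (poly_val g E w s l x) <= sum_abs_coef l * M.
Proof.
  intros HM; induction l as [|t l IH]; intros Hl; simpl.
  - rewrite Cmod_0; lra.
  - eapply Rle_trans; [apply Cmod_triangle|]. rewrite Cmod_mult, Cmod_R.
    assert (Ht : Rabs (coef t) * Cmod (mon_val g E w s t x) <= Rabs (coef t) * M).
    { destruct (Hl t (or_introl eq_refl)) as [-> | Hle].
      - rewrite Rabs_R0; lra.
      - apply Rmult_le_compat_l; [apply Rabs_pos | exact Hle]. }
    pose proof (IH (fun t' H => Hl t' (or_intror H))); lra.
Qed.

(* Satisfied by the monomials of the k-th derivative of g^m, k >= 1; the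
   alternative [coef t = 0] covers the terms killed by a factor [INR 0]. *)
Definition deriv_shape (m k : nat) (t : monomial) : Prop :=
  coef t = 0 \/ (deg_g t < m /\ deg_s t < k /\ deg_w t = deg_s t + k)%nat.

Lemma deriv_shape_poly_deriv m k l :
  (forall t, In t l -> deriv_shape m k t) ->
  forall t, In t (poly_deriv l) -> deriv_shape m (S k) t.
Proof.
  intros Hl t Ht; apply in_flat_map in Ht as [[c j e b a] [Hin Ht]].
  destruct (Hl _ Hin) as [Hc | (Hj & Hb & Ha)]; simpl in *;
    repeat destruct Ht as [<- | Ht]; try contradiction; unfold deriv_shape; simpl.
  all: first [left; rewrite Hc; ring | right; lia].
Qed.

Lemma deriv_shape_iter m k : (1 <= m)%nat ->
  forall t, In t (Nat.iter (S k) poly_deriv [Mono 1 m 0 0 0]) -> deriv_shape m (S k) t.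
Proof.
  intros Hm; induction k as [|k IH].
  - intros t Ht; simpl in Ht; repeat destruct Ht as [<- | Ht]; try contradiction;
      unfold deriv_shape; simpl; first [left; ring | right; lia].
  - exact (deriv_shape_poly_deriv _ _ _ IH).
Qed.

Lemma Cmod_mon_val_le g E w s m k t x B :
  1 <= B -> Cmod (g x) <= B -> Cmod (E x) <= 1 -> 1 <= Cmod s * Cmod (w x) ->
  deriv_shape m k t ->
  coef t = 0 \/
  Cmod (mon_val g E w s t x) <= B ^ (m - 1) * (Cmod s * Cmod (w x)) ^ (k - 1) * Cmod (w x) ^ k.
Proof.
  intros HB Hg HE Hsw [Hc | (Hj & Hb & Ha)]; [now left | right].
  destruct t as [c j e b a]; simpl in *; subst a.
  unfold mon_val; simpl; rewrite !Cmod_mult, !Cmod_pow.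
  pose proof (Cmod_ge_0 (g x)); pose proof (Cmod_ge_0 (E x)); pose proof (Cmod_ge_0 (w x)).
  assert (Hgj : Cmod (g x) ^ j <= B ^ (m - 1)).
  { apply Rle_trans with (B ^ j); [apply pow_incr; lra | apply Rle_pow; [lra | lia]]. }
  assert (HEe : Cmod (E x) ^ e <= 1).
  { rewrite <- (pow1 e); apply pow_incr; lra. }
  assert (Hsb : Cmod s ^ b * Cmod (w x) ^ (b + k)
                <= (Cmod s * Cmod (w x)) ^ (k - 1) * Cmod (w x) ^ k).
  { rewrite pow_add, <- Rmult_assoc, <- Rpow_mult_distr.
    apply Rmult_le_compat_r; [apply pow_le; lra | apply Rle_pow; [lra | lia]]. }
  assert (0 <= Cmod s ^ b * Cmod (w x) ^ (b + k))
    by (apply Rmult_le_pos; apply pow_le; [apply Cmod_ge_0 | lra]).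
  replace (Cmod (g x) ^ j * Cmod (E x) ^ e * Cmod s ^ b * Cmod (w x) ^ (b + k))
    with (Cmod (g x) ^ j * (Cmod (E x) ^ e * (Cmod s ^ b * Cmod (w x) ^ (b + k)))) by ring.
  rewrite Rmult_assoc.
  apply Rmult_le_compat; [apply pow_le; lra | | exact Hgj |].
  - apply Rmult_le_pos; [apply pow_le; lra | assumption].
  - apply Rle_trans with (1 * (Cmod s ^ b * Cmod (w x) ^ (b + k))); [|lra].
    apply Rmult_le_compat_r; assumption.
Qed.

(* The continuous extension of [f t / t] when [f 0 = 0] and [l = f'(0)]. *)
Definition slope0 (l : R) (f : R -> R) (t : R) : R :=
  if Req_EM_T t 0 then l else f t / t.

Lemma continuous_slope0 (f : R -> R) l x :
  f 0 = 0 -> is_derive f 0 l -> continuous f x -> continuous (slope0 l f) x.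
Proof.
  intros Hf0 Hl Hfx; destruct (Req_EM_T x 0) as [-> | Hx].
  - apply continuity_pt_filterlim; intros eps Heps.
    apply is_derive_Reals in Hl; destruct (Hl eps Heps) as [del Hdel].
    exists del; split; [apply cond_pos|].
    intros t [[_ Ht0] Htd]; unfold slope0; simpl in *; unfold Rdist in *.
    destruct (Req_EM_T t 0) as [E|_]; [congruence|].
    destruct (Req_EM_T 0 0) as [_|E]; [|congruence].
    specialize (Hdel t (not_eq_sym Ht0)).
    rewrite Rplus_0_l, Hf0, Rminus_0_r in Hdel. rewrite Rminus_0_r in Htd.
    exact (Hdel Htd).
  - apply continuous_ext_loc with (fun t => f t * / t).
    + apply (locally_open (fun t => t <> 0)); [apply open_neq | | exact Hx].
      intros t Ht; unfold slope0; destruct (Req_EM_T t 0); [contradiction | reflexivity].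
    + apply (continuous_mult (K := R_AbsRing)); [exact Hfx | apply continuous_Rinv, Hx].
Qed.

Lemma Rabs_slope0_le (f : R -> R) l L t :
  Rabs l <= L -> Rabs (f t) <= L * t -> 0 <= t -> Rabs (slope0 l f t) <= L.
Proof.
  intros Hl Hf Ht; unfold slope0; destruct (Req_EM_T t 0) as [_ | Ht0]; [exact Hl|].
  unfold Rdiv; rewrite Rabs_mult, Rabs_inv, (Rabs_right t) by lra.
  apply (Rmult_le_reg_r t); [lra|]. rewrite Rmult_assoc, Rinv_l, Rmult_1_r by lra. exact Hf.
Qed.

Lemma Rabs_slope0_le_div (f : R -> R) l c t :
  Rabs (f t) <= c -> 0 < t -> Rabs (slope0 l f t) <= c / t.
Proof.
  intros Hf Ht; unfold slope0; destruct (Req_EM_T t 0); [lra|].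
  unfold Rdiv; rewrite Rabs_mult, Rabs_inv, (Rabs_right t) by lra.
  apply Rmult_le_compat_r; [left; apply Rinv_0_lt_compat|]; assumption.
Qed.

Lemma Rabs_le_mul_of_derive_le (f df : R -> R) L t :
  (forall x, 0 <= x <= t -> is_derive f x (df x)) ->
  (forall x, 0 <= x <= t -> Rabs (df x) <= L) ->
  f 0 = 0 -> 0 <= t -> Rabs (f t) <= L * t.
Proof.
  intros Hd Hdf Hf0 Ht.
  destruct (MVT_abs f df 0 t) as [c [Hc Hct]].
  { intros c Hct; rewrite Rmin_left, Rmax_right in Hct by lra; apply is_derive_Reals, Hd, Hct. }
  rewrite Rmin_left, Rmax_right in Hct by lra.
  rewrite Hf0, !Rminus_0_r, (Rabs_right t) in Hc by lra. rewrite Hc.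
  apply Rmult_le_compat_r; [exact Ht | apply Hdf, Hct].
Qed.

Lemma abs_RInt_le_log (f : R -> R) A S u :
  (forall x, continuous f x) ->
  (forall t, 0 <= t -> Rabs (f t) <= A * S) ->
  (forall t, 0 < t -> Rabs (f t) <= A / t) ->
  0 < u <= S -> Rabs (RInt f 0 (/ u)) <= A * (1 + ln (S / u)).
Proof.
  intros Hc Hle Hle_div Hu.
  assert (Hex : forall a b, ex_RInt f a b)
    by (intros; apply (ex_RInt_continuous (V := R_CompleteNormedModule)); intros; apply Hc).
  assert (HS : 0 < / S) by (apply Rinv_0_lt_compat; lra).
  assert (HSu : / S <= / u) by (apply Rinv_le_contravar; lra).
  rewrite <- (RInt_Chasles f 0 (/ S) (/ u)) by apply Hex.
  assert (Hhead : Rabs (RInt f 0 (/ S)) <= A).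
  { eapply Rle_trans; [apply abs_RInt_le_const; [lra | apply Hex | intros t Ht; apply Hle; lra]|].
    right; field; lra. }
  assert (Hlog : is_RInt (fun t => A / t) (/ S) (/ u) (A * ln (S / u))).
  { replace (A * ln (S / u)) with (minus (A * ln (/ u)) (A * ln (/ S)))
      by (unfold minus, plus, opp; simpl; rewrite !ln_Rinv, ln_div by lra; ring).
    apply (is_RInt_derive (V := R_CompleteNormedModule) (fun t => A * ln t));
      intros x Hx; rewrite Rmin_left, Rmax_right in Hx by lra.
    - auto_derive; [lra | field; lra].
    - apply (ex_derive_continuous (K := R_AbsRing) (V := R_NormedModule)); auto_derive; lra. }
  assert (Htail : Rabs (RInt f (/ S) (/ u)) <= A * ln (S / u)).
  { apply (norm_RInt_le f (fun t => A / t) (/ S) (/ u));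
      [lra | | apply (RInt_correct (V := R_CompleteNormedModule)), Hex | exact Hlog].
    intros x Hx; apply Hle_div; lra. }
  change (plus (RInt f 0 (/ S)) (RInt f (/ S) (/ u))) with (RInt f 0 (/ S) + RInt f (/ S) (/ u)).
  eapply Rle_trans; [apply Rabs_triang | lra].
Qed.

Lemma exp_neg_le_1 y : 0 <= y -> exp (- y) <= 1.
Proof.
  intros Hy; rewrite <- exp_0; destruct (Req_dec y 0) as [-> | Hy0].
  - rewrite Ropp_0; lra.
  - left; apply exp_increasing; lra.
Qed.

Lemma Rabs_damped_comb_le e p q c d :
  0 <= e <= 1 -> Rabs c <= 1 -> Rabs d <= 1 -> Rabs (e * (p * c + q * d)) <= Rabs p + Rabs q.
Proof.
  intros He Hc Hd; rewrite Rabs_mult, (Rabs_right e) by lra.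
  assert (Hpq : Rabs (p * c + q * d) <= Rabs p + Rabs q).
  { eapply Rle_trans; [apply Rabs_triang|]; rewrite !Rabs_mult.
    apply Rplus_le_compat; rewrite <- Rmult_1_r; apply Rmult_le_compat_l; auto using Rabs_pos. }
  pose proof (Rabs_pos (p * c + q * d)); nra.
Qed.

Definition Gnum_re (a b t : R) : R := 1 - exp (- (t * a)) * cos (t * b).
Definition Gnum_im (a b t : R) : R := exp (- (t * a)) * sin (t * b).

Lemma is_derive_Gnum_re a b (x : R) :
  is_derive (Gnum_re a b) x (exp (- (x * a)) * (a * cos (x * b) + b * sin (x * b))).
Proof. unfold Gnum_re; auto_derive; [exact I | ring]. Qed.

Lemma is_derive_Gnum_im a b (x : R) :
  is_derive (Gnum_im a b) x (exp (- (x * a)) * (b * cos (x * b) + - a * sin (x * b))).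
Proof. unfold Gnum_im; auto_derive; [exact I | ring]. Qed.

Lemma continuous_slope0_Gnum_re a b x : continuous (slope0 a (Gnum_re a b)) x.
Proof.
  apply continuous_slope0.
  - unfold Gnum_re; rewrite !Rmult_0_l, Ropp_0, exp_0, cos_0; ring.
  - eapply is_derive_eq_val; [apply is_derive_Gnum_re|].
    rewrite !Rmult_0_l, Ropp_0, exp_0, cos_0, sin_0; ring.
  - apply (ex_derive_continuous (K := R_AbsRing) (V := R_NormedModule)).
    eexists; apply is_derive_Gnum_re.
Qed.

Lemma continuous_slope0_Gnum_im a b x : continuous (slope0 b (Gnum_im a b)) x.
Proof.
  apply continuous_slope0.
  - unfold Gnum_im; rewrite !Rmult_0_l, sin_0; ring.
  - eapply is_derive_eq_val; [apply is_derive_Gnum_im|].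
    rewrite !Rmult_0_l, Ropp_0, exp_0, cos_0, sin_0; ring.
  - apply (ex_derive_continuous (K := R_AbsRing) (V := R_NormedModule)).
    eexists; apply is_derive_Gnum_im.
Qed.

Definition G_re (a b y : R) : R := RInt (slope0 a (Gnum_re a b)) 0 y.
Definition G_im (a b y : R) : R := RInt (slope0 b (Gnum_im a b)) 0 y.

Lemma G_pair a b v : 0 < v -> G v (a, b) = (G_re a b (/ v), G_im a b (/ v)).
Proof.
  intros Hv; unfold G; apply (is_RInt_unique (V := C_R_CompleteNormedModule)).
  assert (Hv' : 0 < / v) by (apply Rinv_0_lt_compat; exact Hv).
  apply (is_RInt_fct_extend_pair (U := R_NormedModule) (V := R_NormedModule));
    (eapply is_RInt_ext; [| apply (RInt_correct (V := R_CompleteNormedModule));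
      apply (ex_RInt_continuous (V := R_CompleteNormedModule)); intros;
      first [apply continuous_slope0_Gnum_re | apply continuous_slope0_Gnum_im]]);
    intros t Ht; rewrite Rmin_left, Rmax_right in Ht by lra;
    unfold slope0; destruct (Req_EM_T t 0) as [E | _]; try lra;
    unfold Gnum_re, Gnum_im, Cexp, Cdiv, Cminus; simpl;
    rewrite ?Rmult_0_l, ?Rminus_0_r, ?Rplus_0_r, ?Ropp_0, ?cos_neg, ?sin_neg; field; lra.
Qed.

Lemma Rabs_Gnum_re_le a b t : 0 <= a -> 0 <= t -> Rabs (Gnum_re a b t) <= (a + Rabs b) * t.
Proof.
  intros Ha Ht; replace (a + Rabs b) with (Rabs a + Rabs b) by (rewrite (Rabs_right a); lra).
  apply (Rabs_le_mul_of_derive_le _ _ _ _ (fun x _ => is_derive_Gnum_re a b x)); [| |exact Ht].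
  - intros x Hx; apply Rabs_damped_comb_le; [| apply Rabs_le, COS_bound | apply Rabs_le, SIN_bound].
    split; [apply Rlt_le, exp_pos | apply exp_neg_le_1, Rmult_le_pos; lra].
  - unfold Gnum_re; rewrite !Rmult_0_l, Ropp_0, exp_0, cos_0; ring.
Qed.

Lemma Rabs_Gnum_im_le a b t : 0 <= a -> 0 <= t -> Rabs (Gnum_im a b t) <= (a + Rabs b) * t.
Proof.
  intros Ha Ht.
  replace (a + Rabs b) with (Rabs b + Rabs (- a)) by (rewrite Rabs_Ropp, (Rabs_right a); lra).
  apply (Rabs_le_mul_of_derive_le _ _ _ _ (fun x _ => is_derive_Gnum_im a b x)); [| |exact Ht].
  - intros x Hx; apply Rabs_damped_comb_le; [| apply Rabs_le, COS_bound | apply Rabs_le, SIN_bound].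
    split; [apply Rlt_le, exp_pos | apply exp_neg_le_1, Rmult_le_pos; lra].
  - unfold Gnum_im; rewrite !Rmult_0_l, sin_0; ring.
Qed.

Lemma Rabs_Gnum_re_le_2 a b t : 0 <= a -> 0 <= t -> Rabs (Gnum_re a b t) <= 2.
Proof.
  intros Ha Ht; unfold Gnum_re.
  pose proof (exp_pos (- (t * a))); pose proof (exp_neg_le_1 (t * a) ltac:(nra)).
  pose proof (COS_bound (t * b)); apply Rabs_le; split; nra.
Qed.

Lemma Rabs_Gnum_im_le_2 a b t : 0 <= a -> 0 <= t -> Rabs (Gnum_im a b t) <= 2.
Proof.
  intros Ha Ht; unfold Gnum_im.
  pose proof (exp_pos (- (t * a))); pose proof (exp_neg_le_1 (t * a) ltac:(nra)).
  pose proof (SIN_bound (t * b)); apply Rabs_le; split; nra.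
Qed.

Lemma Cmod_G_le s u : 0 <= Re s -> 0 < u <= Cmod s -> Cmod (G u s) <= 4 * (1 + ln (Cmod s / u)).
Proof.
  destruct s as [a b]; unfold Re; simpl fst; intros Ha Hu.
  set (S := Cmod (a, b)) in *.
  assert (Hab : a + Rabs b <= 2 * S).
  { pose proof (Rmax_Cmod (a, b)) as HM; simpl in HM; fold S in HM.
    pose proof (Rmax_l (Rabs a) (Rabs b)); pose proof (Rmax_r (Rabs a) (Rabs b)).
    rewrite (Rabs_right a) in * by lra; lra. }
  assert (Hlog : 0 <= ln (S / u)).
  { rewrite <- ln_1; apply ln_le; [lra|]. apply (Rmult_le_reg_r u); [lra|].
    unfold Rdiv; rewrite Rmult_assoc, Rinv_l; lra. }
  assert (Hre : Rabs (G_re a b (/ u)) <= 2 * (1 + ln (S / u))).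
  { apply abs_RInt_le_log; [apply continuous_slope0_Gnum_re | | | exact Hu]; intros t Ht.
    - apply Rle_trans with (a + Rabs b); [|exact Hab].
      apply Rabs_slope0_le; [| apply Rabs_Gnum_re_le | ]; try lra.
      rewrite (Rabs_right a) by lra; pose proof (Rabs_pos b); lra.
    - apply Rabs_slope0_le_div; [apply Rabs_Gnum_re_le_2 |]; lra. }
  assert (Him : Rabs (G_im a b (/ u)) <= 2 * (1 + ln (S / u))).
  { apply abs_RInt_le_log; [apply continuous_slope0_Gnum_im | | | exact Hu]; intros t Ht.
    - apply Rle_trans with (a + Rabs b); [|exact Hab].
      apply Rabs_slope0_le; [pose proof (Rabs_pos b); lra | apply Rabs_Gnum_im_le | ]; lra.
    - apply Rabs_slope0_le_div; [apply Rabs_Gnum_im_le_2 |]; lra. }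
  rewrite G_pair by lra.
  eapply Rle_trans; [apply Cmod_2Rmax|]; simpl fst; simpl snd.
  assert (Hsqrt2 : sqrt 2 <= 2)
    by (rewrite <- (sqrt_pow2 2) at 2 by lra; apply sqrt_le_1_alt; lra).
  assert (Hmax := Rmax_lub _ _ _ Hre Him).
  pose proof (Rle_trans _ _ _ (Rabs_pos _)
                (Rmax_l (Rabs (G_re a b (/ u))) (Rabs (G_im a b (/ u))))).
  pose proof (sqrt_pos 2); nra.
Qed.

Definition recip (v : R) : C := RtoC (/ v).
Definition exp_neg_div (s : C) (v : R) : C := Cexp (- (recip v * s)).

Lemma Cmod_Cexp z : Cmod (Cexp z) = exp (Re z).
Proof.
  destruct z as [x y]; unfold Cexp, Cmod, Re, Im; simpl fst; simpl snd.
  replace ((exp x * cos y) ^ 2 + (exp x * sin y) ^ 2)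
    with (exp x ^ 2 * ((sin y)² + (cos y)²)) by (unfold Rsqr; ring).
  rewrite sin2_cos2, Rmult_1_r; apply sqrt_pow2, Rlt_le, exp_pos.
Qed.

Lemma Cmod_exp_neg_div_le s v : 0 <= Re s -> 0 < v -> Cmod (exp_neg_div s v) <= 1.
Proof.
  destruct s as [a b]; unfold Re; simpl; intros Ha Hv.
  unfold exp_neg_div, recip; rewrite Cmod_Cexp; unfold Re; simpl.
  replace (- (/ v * a - 0 * b)) with (- (/ v * a)) by ring.
  apply exp_neg_le_1, Rmult_le_pos; [left; apply Rinv_0_lt_compat|]; lra.
Qed.

Lemma is_Cderive_recip : is_Cderive_on (fun v => 0 < v) recip (fun v => - (recip v * recip v))%C.
Proof.
  intros v Hv; unfold recip, Re, Im; simpl; split.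
  - auto_derive; [lra | field; lra].
  - auto_derive; [exact I | ring].
Qed.

Lemma is_Cderive_exp_neg_div s :
  is_Cderive_on (fun v => 0 < v) (exp_neg_div s)
    (fun v => exp_neg_div s v * s * (recip v * recip v))%C.
Proof.
  destruct s as [a b]; intros v Hv; unfold exp_neg_div, recip, Cexp, Re, Im; simpl; split.
  all: auto_derive; [lra | unfold Rminus; field; lra].
Qed.

Lemma is_derive_G_re a b y : is_derive (G_re a b) y (slope0 a (Gnum_re a b) y).
Proof.
  apply is_derive_RInt with 0; [|apply continuous_slope0_Gnum_re].
  apply filter_forall; intro z; apply (RInt_correct (V := R_CompleteNormedModule)).
  apply (ex_RInt_continuous (V := R_CompleteNormedModule)); intros; apply continuous_slope0_Gnum_re.
Qed.

Lemma is_derive_G_im a b y : is_derive (G_im a b) y (slope0 b (Gnum_im a b) y).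
Proof.
  apply is_derive_RInt with 0; [|apply continuous_slope0_Gnum_im].
  apply filter_forall; intro z; apply (RInt_correct (V := R_CompleteNormedModule)).
  apply (ex_RInt_continuous (V := R_CompleteNormedModule)); intros; apply continuous_slope0_Gnum_im.
Qed.

Lemma is_Cderive_G s :
  is_Cderive_on (fun v => 0 < v) (fun v => G v s) (fun v => (exp_neg_div s v - 1) * recip v)%C.
Proof.
  destruct s as [a b]; intros v Hv.
  assert (Hpos : locally v (fun x => 0 < x))
    by exact (locally_open _ _ (open_gt 0) (fun _ H => H) v Hv).
  assert (Hinv : is_derive (fun x : R => / x) v (- 1 / v ^ 2))
    by (apply (is_derive_inv (fun x : R => x) v 1);
        [apply (is_derive_id (K := R_AbsRing)) | cbv beta; lra]).
  assert (Hv' : / v <> 0) by (apply Rinv_neq_0_compat; lra).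
  split.
  - apply is_derive_ext_loc with (fun x => G_re a b (/ x)).
    { eapply filter_imp; [|exact Hpos]; intros x Hx; rewrite G_pair by exact Hx; reflexivity. }
    eapply is_derive_eq_val; [exact (is_derive_comp _ _ _ _ _ (is_derive_G_re a b (/ v)) Hinv)|].
    unfold slope0; destruct (Req_EM_T (/ v) 0); [contradiction|].
    unfold Gnum_re, exp_neg_div, recip, Cexp, Re, Im, scal; simpl.
    unfold mult; simpl; unfold Rminus.
    rewrite !Rmult_0_l, Ropp_0, !Rplus_0_r, cos_neg, sin_neg; field; lra.
  - apply is_derive_ext_loc with (fun x => G_im a b (/ x)).
    { eapply filter_imp; [|exact Hpos]; intros x Hx; rewrite G_pair by exact Hx; reflexivity. }
    eapply is_derive_eq_val; [exact (is_derive_comp _ _ _ _ _ (is_derive_G_im a b (/ v)) Hinv)|].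
    unfold slope0; destruct (Req_EM_T (/ v) 0); [contradiction|].
    unfold Gnum_im, exp_neg_div, recip, Cexp, Re, Im, scal; simpl.
    unfold mult; simpl; unfold Rminus.
    rewrite !Rmult_0_l, Ropp_0, !Rplus_0_r, cos_neg, sin_neg; field; lra.
Qed.

Lemma Cderive_n_Gpow m k s u : 0 < u ->
  Cderive_n (fun v => G v s ^ m)%C k u
  = poly_val (fun v => G v s) (exp_neg_div s) recip s
      (Nat.iter k poly_deriv [Mono 1 m 0 0 0]) u.
Proof.
  intros Hu.
  set (F j := poly_val (fun v => G v s) (exp_neg_div s) recip s
                (Nat.iter j poly_deriv [Mono 1 m 0 0 0])).
  assert (HF0 : forall x, (G x s ^ m)%C = F 0%nat x)
    by (intro x; unfold F, poly_val, mon_val; simpl; ring).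
  transitivity (Cderive_n (F 0%nat) k u).
  - unfold Cderive_n; f_equal; apply Derive_n_ext; intro x; now rewrite HF0.
  - apply (Cderive_n_iter _ F (open_gt 0)); [|exact Hu].
    intro j; apply is_Cderive_on_poly;
      [apply is_Cderive_G | apply is_Cderive_exp_neg_div | apply is_Cderive_recip].
Qed.

Lemma Cmod_Cderive_n_Gpow_le m k s u B :
  (1 <= m)%nat -> 0 <= Re s -> 0 < u <= Cmod s -> 1 <= B -> Cmod (G u s) <= B ->
  Cmod (Cderive_n (fun v => G v s ^ m)%C (S k) u)
  <= sum_abs_coef (Nat.iter (S k) poly_deriv [Mono 1 m 0 0 0])
     * (B ^ (m - 1) * (Cmod s / u) ^ k / u ^ S k).
Proof.
  intros Hm Hre Hu HB HG.
  assert (Hrecip : Cmod (recip u) = / u)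
    by (unfold recip; rewrite Cmod_R; apply Rabs_right, Rle_ge, Rlt_le, Rinv_0_lt_compat; lra).
  replace (B ^ (m - 1) * (Cmod s / u) ^ k / u ^ S k)
    with (B ^ (m - 1) * (Cmod s * Cmod (recip u)) ^ (S k - 1) * Cmod (recip u) ^ S k)
    by (rewrite Hrecip, pow_inv, Nat.sub_succ, Nat.sub_0_r; unfold Rdiv; ring).
  rewrite Cderive_n_Gpow by lra.
  apply Cmod_poly_val_le.
  - rewrite Hrecip; apply Rmult_le_pos; [apply Rmult_le_pos|]; apply pow_le;
      [lra | apply Rmult_le_pos, Rlt_le, Rinv_0_lt_compat | apply Rlt_le, Rinv_0_lt_compat]; lra.
  - intros t Ht; apply Cmod_mon_val_le; [exact HB | exact HG | apply Cmod_exp_neg_div_le; lra | |].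
    + rewrite Hrecip; apply (Rmult_le_reg_r u); [lra|]; rewrite Rmult_assoc, Rinv_l; lra.
    + exact (deriv_shape_iter m k Hm t Ht).
Qed.

Theorem lemma9 (m nu : nat) (Hm : (1 <= m)%nat) (Hnu : (1 <= nu)%nat) :
  exists K : R, 0 < K /\
    forall (s : C) (u : R),
      Re s = 1 -> 1 <= u -> Cmod s > u ->
      Cmod (Cderive_n (fun v => Cpow (G v s) m) nu u)
        <= K * ((1 + ln (Cmod s)) ^ (m - 1) / u ^ nu) * (Cmod s / u) ^ (nu - 1).
Proof.
  destruct nu as [|k]; [lia|]; rewrite Nat.sub_succ, Nat.sub_0_r.
  set (c := sum_abs_coef (Nat.iter (S k) poly_deriv [Mono 1 m 0 0 0])).
  assert (Hc : 0 <= c) by apply sum_abs_coef_ge0.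
  exists (4 ^ (m - 1) * (c + 1)); split; [apply Rmult_lt_0_compat; [apply pow_lt|]; lra|].
  intros s u Hre Hu Hsu.
  assert (Hlog : 0 <= ln u <= ln (Cmod s))
    by (rewrite <- ln_1; split; apply ln_le; lra).
  assert (HG : Cmod (G u s) <= 4 * (1 + ln (Cmod s))).
  { eapply Rle_trans; [apply Cmod_G_le; lra|]; rewrite ln_div; lra. }
  eapply Rle_trans;
    [apply (Cmod_Cderive_n_Gpow_le m k s u (4 * (1 + ln (Cmod s))));
       first [exact Hm | exact HG | lra]|].
  rewrite Rpow_mult_distr; fold c.
  assert (HP : 0 <= (1 + ln (Cmod s)) ^ (m - 1) * (Cmod s / u) ^ k / u ^ S k).
  { apply Rdiv_le_0_compat; [apply Rmult_le_pos; apply pow_le | apply pow_lt]; try lra.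
    apply Rdiv_le_0_compat; lra. }
  pose proof (pow_le 4 (m - 1) ltac:(lra)) as H4.
  replace (4 ^ (m - 1) * (c + 1) * ((1 + ln (Cmod s)) ^ (m - 1) / u ^ S k) * (Cmod s / u) ^ k)
    with (c * (4 ^ (m - 1) * (1 + ln (Cmod s)) ^ (m - 1) * (Cmod s / u) ^ k / u ^ S k)
          + 4 ^ (m - 1) * ((1 + ln (Cmod s)) ^ (m - 1) * (Cmod s / u) ^ k / u ^ S k))
    by (unfold Rdiv; ring).
  pose proof (Rmult_le_pos _ _ H4 HP); lra.
Qed.
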